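(* Let $p,q$ be positive integers and let $s_1,\dots,s_p,d_1,\dots,d_q:[0,1]\to[0,1]$ be the truth functions of the hedge connectives of FLn with many hedges; that is, writing $s_0=d_0=\mathrm{id}_{[0,1]}$, for all $a,b\in[0,1]$: (1) $a\Rightarrow b\ \le\ h(a)\Rightarrow h(b)$ for every $h\in\{s_1,\dots,s_p,d_1,\dots,d_q\}$; (2) $s_i(a)\le s_{i-1}(a)$ for $i=1,\dots,p$; (3) $s_p(1)=1$; (4) $d_{j-1}(a)\le d_j(a)$ for $j=1,\dots,q$; (5) $d_q(0)=0$. Then for every $j=1,\dots,q$, $d_j$ is superdiagonal, i.e. $d_j(a)\ge a$ for all $a\in[0,1]$.
   Context: Truth values form the Łukasiewicz algebra on $[0,1]$ with $a\Rightarrow b=\min(1,1-a+b)$. FLn with many hedges extends the first-order fuzzy logic FLn (with logical constants $\overline{a}$ for each $a\in[0,1]$) by truth-stressing hedges $s_1,\dots,s_p$ and truth-depressing hedges $d_1,\dots,d_q$ ($s_0,d_0$ denote the identity), with degree-1 logical axioms $(A\to B)\to(hA\to hB)$, $s_iA\to s_{i-1}A$, $s_p\overline{1}$, $d_{j-1}A\to d_jA$, $\neg d_q\overline{0}$. Conditions (1)–(5) express that these axioms have truth value 1 in every structure, where $\mathcal{D}(hA)=h(\mathcal{D}(A))$. *)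

From Stdlib Require Import Reals.
Open Scope R_scope.

Definition luk_imp (a b : R) : R := Rmin 1 (1 - a + b).

Definition in01 (a : R) : Prop := 0 <= a <= 1.

From Stdlib Require Import Reals Lia.
Open Scope R_scope.

(* Only conditions (4) and [d_0 = id] are needed: the chain d_0 <= d_1 <= ... <= d_q
   gives [a = d_0 a <= d_j a]. *)

Lemma chain_le_from_0 (f : nat -> R) (q : nat) :
  (forall j, (1 <= j <= q)%nat -> f (j - 1)%nat <= f j) ->
  forall j, (j <= q)%nat -> f 0%nat <= f j.
Proof.
  intros Hstep j Hj.
  induction j as [|j IH].
  - apply Rle_refl.
  - apply Rle_trans with (f j); [apply IH; lia|].
    replace j with (S j - 1)%nat at 1 by lia.
    apply Hstep; lia.
Qed.

Theorem mainTheorem3 (p q : nat) (s d : nat -> R -> R) :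
  (0 < p)%nat -> (0 < q)%nat ->
  (forall a, s 0%nat a = a) -> (forall a, d 0%nat a = a) ->
  (* each hedge maps [0,1] into [0,1] *)
  (forall i a, (1 <= i <= p)%nat -> in01 a -> in01 (s i a)) ->
  (forall j a, (1 <= j <= q)%nat -> in01 a -> in01 (d j a)) ->
  (* (1) *)
  (forall i a b, (1 <= i <= p)%nat -> in01 a -> in01 b ->
      luk_imp a b <= luk_imp (s i a) (s i b)) ->
  (forall j a b, (1 <= j <= q)%nat -> in01 a -> in01 b ->
      luk_imp a b <= luk_imp (d j a) (d j b)) ->
  (* (2) *)
  (forall i a, (1 <= i <= p)%nat -> in01 a -> s i a <= s (i - 1)%nat a) ->
  (* (3) *)
  s p 1 = 1 ->
  (* (4) *)
  (forall j a, (1 <= j <= q)%nat -> in01 a -> d (j - 1)%nat a <= d j a) ->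
  (* (5) *)
  d q 0 = 0 ->
  forall j a, (1 <= j <= q)%nat -> in01 a -> a <= d j a.
Proof.
  intros _ _ _ Hd0 _ _ _ _ _ _ Hd_incr _ j a Hj Ha.
  rewrite <- (Hd0 a) at 1.
  apply (chain_le_from_0 (fun k => d k a) q); [|lia].
  intros k Hk; exact (Hd_incr k a Hk Ha).
Qed.
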